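(* In the setting below, let $L_{\Sigma_1,\alpha_1}$ be any finite-dimensional Krein subspace of $L_{\Sigma_1}$. Then there exists a finite-dimensional Krein subspace $L_{\Sigma,\alpha}$ of $L_\Sigma$ such that for every $\phi\in L_{\Sigma_1,\alpha_1}$ there are $\phi',\phi''\in L_{\Sigma,\alpha}$ with $$u_M(\phi,\phi',\phi'')=(u_{M_1}(\phi),\phi'',\phi').$$
   Context: A classical free fermionic field theory on a spacetime system is given as follows. To each (oriented) hypersurface $\Sigma$ is associated a real separable Krein space $(L_\Sigma,g_\Sigma)$ (a real inner product space with an orthogonal decomposition $L_\Sigma=L_{\Sigma,+}\oplus L_{\Sigma,-}$, $g_\Sigma$ positive definite and complete on $L_{\Sigma,+}$, negative definite and complete on $L_{\Sigma,-}$). A finite-dimensional Krein subspace is a finite-dimensional subspace on which $g_\Sigma$ is non-degenerate. For $\overline{\Sigma}$, $L_{\overline\Sigma}$ is identified with $L_\Sigma$ as a vector space with $g_{\overline\Sigma}=-g_\Sigma$. If $\Sigma$ decomposes as $\Sigma_1\cup\cdots\cup\Sigma_n$, then $L_\Sigma\cong L_{\Sigma_1}\oplus\cdots\oplus L_{\Sigma_n}$ isometrically. To each region $N$ is associated a real vector space $L_N$ and a linear map $r_N:L_N\to L_{\partial N}$ whose image $L_{\tilde N}$ is a hypermaximal neutral subspace of $L_{\partial N}$ ($g_{\partial N}$ vanishes on it and it equals its own orthogonal complement). For a region $N$, $u_N:L_{\partial N}\to L_{\partial N}$ is the unique linear map with $u_N^2=\mathrm{id}$, mapping $L_{\partial N,\pm}$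 onto $L_{\partial N,\mp}$ with $g_{\partial N}(u_Nx,u_Ny)=-g_{\partial N}(x,y)$, and equal to the identity on $L_{\tilde N}$. Setting: $M$ is a region with boundary decomposing as a disjoint union $\partial M=\Sigma_1\cup\Sigma\cup\overline{\Sigma'}$, $\Sigma'$ a copy of $\Sigma$, and $M_1$ is the region obtained by gluing $M$ to itself along $\Sigma,\overline{\Sigma'}$ (so $\partial M_1=\Sigma_1$). Elements of $L_{\partial M}=L_{\Sigma_1}\oplus L_\Sigma\oplus L_{\overline{\Sigma'}}$ are written as triples, with $L_{\overline{\Sigma'}}$ identified with $L_\Sigma$. Gluing axiom: there is an injective linear map $r_{M;\Sigma,\overline{\Sigma'}}:L_{M_1}\to L_M$ whose image is exactly the set of $x\in L_M$ for which the $L_\Sigma$- and $L_{\overline{\Sigma'}}$-components of $r_M(x)$ coincide, and such that $r_{M_1}$ equals $r_M\circ r_{M;\Sigma,\overline{\Sigma'}}$ followed by the projection onto $L_{\Sigma_1}$. *)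

From mathcomp Require Import all_boot all_algebra.
From mathcomp Require Import reals.
Set Implicit Arguments. Unset Strict Implicit. Unset Printing Implicit Defensive.
Import GRing.Theory Num.Theory.
Local Open Scope ring_scope.

Section KreinDefs.
Variables (R : realType) (V : lmodType R).

Definition is_subspace (S : V -> Prop) : Prop :=
  S 0 /\ forall (a : R) x y, S x -> S y -> S (a *: x + y).

Definition sym_bilinear (g : V -> V -> R) : Prop :=
  (forall x y, g x y = g y x) /\
  (forall (a : R) x y z, g (a *: x + y) z = a * g x z + g y z).

(* completeness of the subspace S for the norm sqrt (s * g x x), s = +-1 *)
Definition complete_wrt (g : V -> V -> R) (s : R) (S : V -> Prop) : Prop :=
  forall u : nat -> V, (forall n, S (u n)) ->
    (forall e : R, 0 < e -> exists N, forall m n, (N <= m)%N -> (N <= n)%N ->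
        Num.sqrt (s * g (u m - u n) (u m - u n)) < e) ->
    exists l, S l /\ forall e : R, 0 < e -> exists N, forall n, (N <= n)%N ->
        Num.sqrt (s * g (u n - l) (u n - l)) < e.

Definition is_krein (g : V -> V -> R) (Lp Lm : V -> Prop) : Prop :=
  [/\ sym_bilinear g /\ is_subspace Lp /\ is_subspace Lm,
      ((forall x, exists xp xm, [/\ Lp xp, Lm xm & x = xp + xm]) /\
       (forall x, Lp x -> Lm x -> x = 0)),
      (forall xp xm, Lp xp -> Lm xm -> g xp xm = 0) /\
      ((forall x, Lp x -> x <> 0 -> 0 < g x x) /\
       (forall x, Lm x -> x <> 0 -> g x x < 0)),
      (complete_wrt g 1 Lp /\ complete_wrt g (-1) Lm) &
      exists d : nat -> V, forall x (e : R), 0 < e -> exists n,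
        forall xp xm, Lp xp -> Lm xm -> x - d n = xp + xm ->
          Num.sqrt (g xp xp - g xm xm) < e].

Definition fd_krein_subspace (g : V -> V -> R) (W : V -> Prop) : Prop :=
  [/\ is_subspace W,
      (exists s : seq V, forall x,
          W x <-> exists c : 'I_(size s) -> R, x = \sum_(i < size s) c i *: s`_i) &
      (forall w, W w -> (forall v, W v -> g w v = 0) -> w = 0)].

Definition hypermaximal_neutral (g : V -> V -> R) (L : V -> Prop) : Prop :=
  is_subspace L /\
  (forall x y, L x -> L y -> g x y = 0) /\
  (forall y, (forall x, L x -> g x y = 0) -> L y).

(* u is "the" map u_N associated with the Krein space (V,g,Lp,Lm) and the
   hypermaximal neutral subspace Lt = L_{tilde N} *)
Definition is_u_map (g : V -> V -> R) (Lp Lm Lt : V -> Prop) (u : V -> V) : Prop :=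
  [/\ (forall (a : R) x y, u (a *: x + y) = a *: u x + u y) /\
      (forall x, u (u x) = x),
      ((forall x, Lp x -> Lm (u x)) /\ (forall y, Lm y -> exists x, Lp x /\ u x = y)),
      ((forall x, Lm x -> Lp (u x)) /\ (forall y, Lp y -> exists x, Lm x /\ u x = y)),
      (forall x y, g (u x) (u y) = - g x y) &
      (forall x, Lt x -> u x = x)].

End KreinDefs.

Definition is_linear (R : realType) (U V : lmodType R) (f : U -> V) : Prop :=
  forall (a : R) x y, f (a *: x + y) = a *: f x + f y.

Definition image_of (A B : Type) (f : A -> B) : B -> Prop :=
  fun y => exists x, f x = y.

(* Krein structure on L_{dM} = L_{Sigma1} (+) L_Sigma (+) L_{bar Sigma'},
   with L_{bar Sigma'} identified with L_Sigma and carrying -g_Sigma *)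
Section Boundary.
Variables (R : realType) (L1 LS : lmodType R).
Variables (g1 : L1 -> L1 -> R) (gS : LS -> LS -> R).
Variables (L1p L1m : L1 -> Prop) (LSp LSm : LS -> Prop).

Definition bdry_form (x y : L1 * LS * LS) : R :=
  g1 x.1.1 y.1.1 + gS x.1.2 y.1.2 - gS x.2 y.2.
Definition bdry_plus (x : L1 * LS * LS) : Prop :=
  [/\ L1p x.1.1, LSp x.1.2 & LSm x.2].
Definition bdry_minus (x : L1 * LS * LS) : Prop :=
  [/\ L1m x.1.1, LSm x.1.2 & LSp x.2].
End Boundary.

From HB Require Import structures.
From mathcomp Require Import all_boot all_order all_algebra reals lra.
From Stdlib Require Import ClassicalEpsilon.
Import Order.TTheory GRing.Theory Num.Theory.
Local Open Scope ring_scope.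
Set Implicit Arguments. Unset Strict Implicit.

(* Write phi = (a + b)/2 with a = phi + u_{M1} phi and b = phi - u_{M1} phi.
   Since u_{M1} a = a, a lies in L_{M1}~, so by the gluing axiom (a, x, x) lies
   in L_M~ for some x, and u_M fixes it.  Since u_{M1} b = -b, the reflection
   bp - bm of b = bp + bm through the fundamental decomposition lies in
   L_{M1}~; gluing gives (bp - bm, z, z) in L_M~, and reflecting it through the
   fundamental decomposition of L_{dM} yields a vector (b, d, -d) that u_M
   negates.  Then phi' = (x + d)/2 and phi'' = (x - d)/2 work.  By linearity
   it suffices to do this for a finite spanning family of L_{Sigma1,alpha1};
   the Sigma-components found span, together with their fundamental
   components, a finite-dimensional Krein subspace. *)

Section IsLinear.
Variables (R : realType) (U V : lmodType R) (f : U -> V).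
Hypothesis f_lin : is_linear f.

Definition linear_of : {linear U -> V} :=
  HB.pack f (GRing.isLinear.Build R U V *:%R f f_lin).

Lemma is_linear0 : f 0 = 0. Proof. exact: linear0 linear_of. Qed.
Lemma is_linearD : {morph f : x y / x + y}. Proof. exact: linearD linear_of. Qed.
Lemma is_linearB : {morph f : x y / x - y}. Proof. exact: linearB linear_of. Qed.
Lemma is_linearZ a : {morph f : x / a *: x}. Proof. exact: linearZZ linear_of a. Qed.

End IsLinear.

Section Subspace.
Variables (R : realType) (V : lmodType R) (S : V -> Prop).
Hypothesis S_sub : is_subspace S.

Lemma subspace0 : S 0. Proof. by case: S_sub. Qed.

Lemma subspaceZ a x : S x -> S (a *: x).
Proof. by case: S_sub => S0 SZD Sx; have := SZD a x 0 Sx S0; rewrite addr0. Qed.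

Lemma subspaceD x y : S x -> S y -> S (x + y).
Proof. by case: S_sub => _ SZD Sx Sy; have := SZD 1 x y Sx Sy; rewrite scale1r. Qed.

Lemma subspaceN x : S x -> S (- x).
Proof. by move=> Sx; rewrite -scaleN1r; apply: subspaceZ. Qed.

Lemma subspaceB x y : S x -> S y -> S (x - y).
Proof. by move=> Sx Sy; apply: subspaceD => //; apply: subspaceN. Qed.

End Subspace.

Section Span.
Variables (R : realType) (V : lmodType R).

Definition span (t : seq V) (x : V) : Prop :=
  exists c : 'I_(size t) -> R, x = \sum_(i < size t) c i *: t`_i.

Lemma span_subspace t : is_subspace (span t).
Proof.
split; first by exists (fun=> 0); rewrite big1 // => i _; rewrite scale0r.
move=> a _ _ [c ->] [d ->]; exists (fun i => a * c i + d i).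
by rewrite scaler_sumr -big_split; apply: eq_bigr => i _; rewrite scalerDl scalerA.
Qed.

Lemma span_mem t x : x \in t -> span t x.
Proof.
move=> xt; have xi : (index x t < size t)%N by rewrite index_mem.
exists (fun i => (i == Ordinal xi)%:R).
rewrite (bigD1 (Ordinal xi)) //= eqxx scale1r nth_index // big1 ?addr0 //.
by move=> i /negbTE ->; rewrite scale0r.
Qed.

Lemma span_min (S : V -> Prop) t :
  is_subspace S -> (forall x, x \in t -> S x) -> forall x, span t x -> S x.
Proof.
move=> S_sub tS _ [c ->]; apply: (big_ind S) => [|y z|i _].
- exact: subspace0.
- exact: subspaceD.
- by apply: subspaceZ => //; apply/tS/mem_nth.
Qed.

End Span.

Section FundamentalDecomposition.
Variables (R : realType) (V : lmodType R) (Lp Lm : V -> Prop).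
Hypotheses (Lp_sub : is_subspace Lp) (Lm_sub : is_subspace Lm).
Hypothesis Lpm_disj : forall x, Lp x -> Lm x -> x = 0.

Lemma decomposition_uniq xp yp xm ym : Lp xp -> Lp yp -> Lm xm -> Lm ym ->
  xp + xm = yp + ym -> xp = yp /\ xm = ym.
Proof.
move=> xp_pos yp_pos xm_neg ym_neg e.
have dpm : xp - yp = ym - xm.
  by apply: (addIr xm); rewrite addrNK addrAC e addrAC subrr add0r.
have dp0 : xp - yp = 0 by apply: Lpm_disj; [|rewrite dpm]; apply: subspaceB.
split; apply/eqP; first by rewrite -subr_eq0 dp0.
by rewrite eq_sym -subr_eq0 -dpm dp0.
Qed.

Variables (g : V -> V -> R) (Lt : V -> Prop) (u : V -> V).
Hypothesis hu : is_u_map g Lp Lm Lt u.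

Lemma u_fixed_neutral v : hypermaximal_neutral g Lt -> u v = v -> Lt v.
Proof.
case=> _ [_ Lt_max] uv; apply: Lt_max => x Ltx.
have [_ _ _ u_anti u_id] := hu.
by have := u_anti x v; rewrite u_id // uv; lra.
Qed.

(* [u] swaps [Lp] and [Lm], so on an eigenvector [vp + vm] it must map [vm]
   to [c vp] and [vp] to [c vm]. *)
Lemma u_reflect (c : R) vp vm : Lp vp -> Lm vm ->
  u (vp + vm) = c *: (vp + vm) -> u (vp - vm) = - c *: (vp - vm).
Proof.
have [[u_lin _] [u_pos _] [u_neg _] _ _] := hu.
move=> vp_pos vm_neg.
rewrite (is_linearD u_lin) (is_linearB u_lin) scalerDr addrC.
move=> /decomposition_uniq [||||->->] //.
- exact: u_neg.
- exact: subspaceZ.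
- exact: u_pos.
- exact: subspaceZ.
by rewrite scaleNr scalerBr opprB.
Qed.

End FundamentalDecomposition.

Lemma form_sum_diff (R : realType) (V : lmodType R) (g : V -> V -> R) x y :
  sym_bilinear g -> g (x + y) (x - y) = g x x - g y y.
Proof.
case=> g_sym g_lin.
have gD z a b : g (a + b) z = g a z + g b z by have := g_lin 1 a b z; rewrite scale1r mul1r.
have g0 z : g 0 z = 0 by have := g_lin 1 0 0 z; rewrite scale1r addr0 mul1r; lra.
have gN z a : g (- a) z = - g a z.
  by have := g_lin (-1) a 0 z; rewrite scaleN1r addr0 g0 addr0 mulN1r.
by rewrite gD !(g_sym _ (x - y)) !gD !gN (g_sym y x); lra.
Qed.

Section KreinSpace.
Variables (R : realType) (V : lmodType R) (g : V -> V -> R) (Lp Lm : V -> Prop).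
Hypothesis hK : is_krein g Lp Lm.

Lemma krein_orthogonal_reflection_eq0 wp wm : Lp wp -> Lm wm ->
  g (wp + wm) (wp - wm) = 0 -> wp + wm = 0.
Proof.
have [[g_bil _] _ [_ [g_pos g_neg]] _ _] := hK.
move=> wp_pos wm_neg; rewrite form_sum_diff // => null.
have g00 : g 0 0 = 0 by have := form_sum_diff 0 0 g_bil; rewrite addr0 subr0 subrr.
have gp : 0 <= g wp wp.
  by case: (eqVneq wp 0) => [->|/eqP nz]; [rewrite g00 | apply/ltW/g_pos].
have gm : g wm wm <= 0.
  by case: (eqVneq wm 0) => [->|/eqP nz]; [rewrite g00 | apply/ltW/g_neg].
have gwp : g wp wp = 0 by lra.
have gwm : g wm wm = 0 by lra.
have wp0 : wp = 0.
  by apply/eqP; apply: contraT => /eqP wp_nz; have := g_pos _ wp_pos wp_nz; rewrite gwp ltxx.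
have wm0 : wm = 0.
  by apply/eqP; apply: contraT => /eqP wm_nz; have := g_neg _ wm_neg wm_nz; rewrite gwm ltxx.
by rewrite wp0 wm0 addr0.
Qed.

Section SignedSpan.
Variable t : seq V.
Hypothesis t_signed : forall y, y \in t -> Lp y \/ Lm y.

Lemma signed_span_decomposition w : span t w ->
  exists wp wm, [/\ span t wp, span t wm, Lp wp, Lm wm & w = wp + wm].
Proof.
have [[_ [Lp_sub Lm_sub]] _ _ _ _] := hK.
have t_sub := span_subspace t.
move: w; apply: span_min => [|y yt].
  split.
    exists 0, 0; split; rewrite ?addr0 //;
      by [exact: subspace0 t_sub | exact: subspace0 Lp_sub | exact: subspace0 Lm_sub].
  move=> a _ _ [xp [xm [? ? ? ? ->]]] [yp [ym [? ? ? ? ->]]].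
  exists (a *: xp + yp), (a *: xm + ym); split.
  1-4: by apply: subspaceD => //; apply: subspaceZ.
  by rewrite scalerDr addrACA.
have [y_pos|y_neg] := t_signed yt.
- exists y, 0; split; rewrite ?addr0 //.
  + exact: span_mem yt.
  + exact: subspace0 t_sub.
  + exact: subspace0 Lm_sub.
- exists 0, y; split; rewrite ?add0r //.
  + exact: subspace0 t_sub.
  + exact: span_mem yt.
  + exact: subspace0 Lp_sub.
Qed.

Lemma signed_span_fd_krein : fd_krein_subspace g (span t).
Proof.
split; [exact: span_subspace | by exists t |].
move=> w /signed_span_decomposition [wp [wm [wp_span wm_span wp_pos wm_neg ->]]] w_null.
apply: krein_orthogonal_reflection_eq0 => //; apply: w_null.
exact: subspaceB (span_subspace t) _ _ wp_span wm_span.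
Qed.

End SignedSpan.

Lemma signed_cover (s : seq V) : exists t : seq V,
  (forall y, y \in t -> Lp y \/ Lm y) /\ forall x, x \in s -> span t x.
Proof.
have [_ [decomp _] _ _ _] := hK.
elim: s => [|x s [t [t_signed s_span]]]; first by exists [::].
have [xp [xm [xp_pos xm_neg ->]]] := decomp x.
have t'_span y : y \in [:: xp, xm & t] -> span [:: xp, xm & t] y by apply: span_mem.
exists [:: xp, xm & t]; split.
  by move=> y; rewrite !inE => /orP[/eqP->|/orP[/eqP->|/t_signed]]; [left|right|].
move=> y; rewrite inE => /orP[/eqP->|/s_span].
  by apply: (subspaceD (span_subspace _)); apply: t'_span; rewrite !inE eqxx ?orbT.
apply: span_min; first exact: span_subspace.
by move=> z zt; apply: t'_span; rewrite !inE zt !orbT.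
Qed.

Lemma fd_krein_subspace_cover (s : seq V) :
  exists W, fd_krein_subspace g W /\ forall x, x \in s -> W x.
Proof.
have [t [t_signed s_span]] := signed_cover s.
by exists (span t); split; [exact: signed_span_fd_krein | exact: s_span].
Qed.

End KreinSpace.

Lemma half_sum_diff (R : realType) (V : lmodType R) (v w : V) :
  2^-1 *: ((v + w) + (v - w)) = v.
Proof.
by rewrite addrACA subrr addr0 -mulr2n -scaler_nat scalerA mulVf ?scale1r ?pnatr_eq0.
Qed.

Lemma half_sum_sub (R : realType) (V : lmodType R) (v w : V) :
  2^-1 *: ((v + w) - (v - w)) = w.
Proof. by rewrite opprB (addrC v) half_sum_diff. Qed.

Section Boundary.
Variables (R : realType) (L1 LS : lmodType R).
Variables (g1 : L1 -> L1 -> R) (L1p L1m : L1 -> Prop).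
Variables (gS : LS -> LS -> R) (LSp LSm : LS -> Prop).
Hypotheses (hK1 : is_krein g1 L1p L1m) (hKS : is_krein gS LSp LSm).

Lemma bdry_plus_subspace : is_subspace (bdry_plus L1p LSp LSm).
Proof.
have [[_ [[L1p0 L1pZD] _]] _ _ _ _] := hK1.
have [[_ [[LSp0 LSpZD] [LSm0 LSmZD]]] _ _ _ _] := hKS.
split; first by split.
by move=> a x y [? ? ?] [? ? ?]; split; [apply: L1pZD | apply: LSpZD | apply: LSmZD].
Qed.

Lemma bdry_minus_subspace : is_subspace (bdry_minus L1m LSp LSm).
Proof.
have [[_ [_ [L1m0 L1mZD]]] _ _ _ _] := hK1.
have [[_ [[LSp0 LSpZD] [LSm0 LSmZD]]] _ _ _ _] := hKS.
split; first by split.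
by move=> a x y [? ? ?] [? ? ?]; split; [apply: L1mZD | apply: LSmZD | apply: LSpZD].
Qed.

Lemma bdry_plus_minus_disjoint x :
  bdry_plus L1p LSp LSm x -> bdry_minus L1m LSp LSm x -> x = 0.
Proof.
have [_ [_ disj1] _ _ _] := hK1; have [_ [_ disjS] _ _ _] := hKS.
case: x => [[x1 x2] x3] [/= ? ? ?] [/= ? ? ?].
by rewrite (disj1 x1) // (disjS x2) // (disjS x3).
Qed.

End Boundary.

Section Gluing.
Variables (R : realType) (L1 LS LM LM1 : lmodType R).
Variables (g1 : L1 -> L1 -> R) (L1p L1m : L1 -> Prop).
Variables (gS : LS -> LS -> R) (LSp LSm : LS -> Prop).
Hypotheses (hK1 : is_krein g1 L1p L1m) (hKS : is_krein gS LSp LSm).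
Variables (rM : LM -> L1 * LS * LS) (rM1 : LM1 -> L1) (rglue : LM1 -> LM).
Hypothesis hrM1_hyp : hypermaximal_neutral g1 (image_of rM1).
Hypothesis hglue_img : forall x : LM, image_of rglue x <-> (rM x).1.2 = (rM x).2.
Hypothesis hglue_r : forall y : LM1, rM1 y = (rM (rglue y)).1.1.
Variables (uM : L1 * LS * LS -> L1 * LS * LS) (uM1 : L1 -> L1).
Hypothesis huM : is_u_map (bdry_form g1 gS) (bdry_plus L1p LSp LSm)
  (bdry_minus L1m LSp LSm) (image_of rM) uM.
Hypothesis huM1 : is_u_map g1 L1p L1m (image_of rM1) uM1.

Lemma glue_diagonal c : image_of rM1 c -> exists s, image_of rM (c, s, s).
Proof.
case=> y <-; exists (rM (rglue y)).1.2, (rglue y).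
have := (hglue_img (rglue y)).1 (ex_intro _ y erefl).
by rewrite hglue_r; case: (rM (rglue y)) => [[x1 x2] x3] /= ->.
Qed.

Definition has_glued_pair (W : LS -> Prop) (phi : L1) : Prop :=
  exists phi' phi'', [/\ W phi', W phi'' & uM (phi, phi', phi'') = (uM1 phi, phi'', phi')].

Lemma has_glued_pair_subspace W : is_subspace W -> is_subspace (has_glued_pair W).
Proof.
have [[uM_lin _] _ _ _ _] := huM; have [[uM1_lin _] _ _ _ _] := huM1.
move=> [W0 WZD]; split.
  by exists 0, 0; split => //; rewrite (is_linear0 uM1_lin); apply: (is_linear0 uM_lin).
move=> a phi psi [phi' [phi'' [W' W'' e_phi]]] [psi' [psi'' [V' V'' e_psi]]].
exists (a *: phi' + psi'), (a *: phi'' + psi''); split; try exact: WZD.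
have -> : (a *: phi + psi, a *: phi' + psi', a *: phi'' + psi'')
  = a *: (phi, phi', phi'') + (psi, psi', psi'') by [].
by rewrite (is_linearD uM_lin) (is_linearZ uM_lin) e_phi e_psi uM1_lin.
Qed.

Lemma glued_fixed a : uM1 a = a -> exists x, uM (a, x, x) = (a, x, x).
Proof.
have [_ _ _ _ uM_id] := huM.
move=> /(u_fixed_neutral huM1 hrM1_hyp)/glue_diagonal [x a_glued].
by exists x; apply: uM_id.
Qed.

Lemma glued_antifixed b : uM1 b = - b -> exists d, uM (b, d, - d) = - (b, d, - d).
Proof.
have [[_ [L1p_sub L1m_sub]] [decomp1 disj1] _ _ _] := hK1.
have [_ [decompS _] _ _ _] := hKS.
have [_ _ _ _ uM_id] := huM.
move=> b_anti; have [bp [bm [bp_pos bm_neg b_split]]] := decomp1 b.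
have [z bz_glued] : exists z, image_of rM (bp - bm, z, z).
  apply/glue_diagonal/(u_fixed_neutral huM1 hrM1_hyp).
  have : uM1 (bp + bm) = -1 *: (bp + bm) by rewrite -b_split scaleN1r.
  by move/(u_reflect L1p_sub L1m_sub disj1 huM1 bp_pos bm_neg); rewrite opprK scale1r.
have [zp [zm [zp_pos zm_neg z_split]]] := decompS z.
have bz_split : (bp - bm, z, z) = (bp, zp, zm) + (- bm, zm, zp).
  by rewrite z_split {2}(addrC zp).
have bz_fixed : uM ((bp, zp, zm) + (- bm, zm, zp)) = 1 *: ((bp, zp, zm) + (- bm, zm, zp)).
  by rewrite scale1r -bz_split; apply: uM_id.
exists (zp - zm).
have -> : (b, zp - zm, - (zp - zm)) = (bp, zp, zm) - (- bm, zm, zp).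
  by rewrite b_split opprB -[bm in LHS]opprK.
rewrite (u_reflect (bdry_plus_subspace hK1 hKS) (bdry_minus_subspace hK1 hKS)
  (bdry_plus_minus_disjoint hK1 hKS) huM _ _ bz_fixed) ?scaleN1r //.
by split => //; apply: subspaceN.
Qed.

Lemma exists_glued_pair phi :
  exists p : LS * LS, uM (phi, p.1, p.2) = (uM1 phi, p.2, p.1).
Proof.
have [[uM_lin _] _ _ _ _] := huM; have [[uM1_lin uM1_inv] _ _ _ _] := huM1.
have [x a_fixed] : exists x, uM (phi + uM1 phi, x, x) = (phi + uM1 phi, x, x).
  by apply: glued_fixed; rewrite (is_linearD uM1_lin) uM1_inv addrC.
have [d b_anti] : exists d, uM (phi - uM1 phi, d, - d) = - (phi - uM1 phi, d, - d).
  by apply: glued_antifixed; rewrite (is_linearB uM1_lin) uM1_inv opprB.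
exists (2^-1 *: (x + d), 2^-1 *: (x - d)) => /=.
have -> : (phi, 2^-1 *: (x + d), 2^-1 *: (x - d))
    = 2^-1 *: ((phi + uM1 phi, x, x) + (phi - uM1 phi, d, - d)).
  by rewrite -{1}(half_sum_diff phi (uM1 phi)).
rewrite (is_linearZ uM_lin) (is_linearD uM_lin) a_fixed b_anti.
by rewrite -[uM1 phi in RHS](half_sum_sub phi) -[X in _ = (_, _, 2^-1 *: (x + X))]opprK.
Qed.

End Gluing.

Theorem mainTheorem2
  (R : realType)
  (L1 LS : lmodType R)
  (g1 : L1 -> L1 -> R) (L1p L1m : L1 -> Prop)
  (gS : LS -> LS -> R) (LSp LSm : LS -> Prop)
  (hK1 : is_krein g1 L1p L1m) (hKS : is_krein gS LSp LSm)
  (LM : lmodType R) (rM : LM -> L1 * LS * LS)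
  (hrM_lin : is_linear rM)
  (hrM_hyp : hypermaximal_neutral (bdry_form g1 gS) (image_of rM))
  (LM1 : lmodType R) (rM1 : LM1 -> L1)
  (hrM1_lin : is_linear rM1)
  (hrM1_hyp : hypermaximal_neutral g1 (image_of rM1))
  (rglue : LM1 -> LM)
  (hglue_lin : is_linear rglue)
  (hglue_inj : injective rglue)
  (hglue_img : forall x : LM, image_of rglue x <-> (rM x).1.2 = (rM x).2)
  (hglue_r : forall y : LM1, rM1 y = (rM (rglue y)).1.1)
  (uM : L1 * LS * LS -> L1 * LS * LS)
  (huM : is_u_map (bdry_form g1 gS) (bdry_plus L1p LSp LSm)
                  (bdry_minus L1m LSp LSm) (image_of rM) uM)
  (uM1 : L1 -> L1)
  (huM1 : is_u_map g1 L1p L1m (image_of rM1) uM1)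
  (W1 : L1 -> Prop) (hW1 : fd_krein_subspace g1 W1) :
  exists W : LS -> Prop,
    fd_krein_subspace gS W /\
    forall phi, W1 phi ->
      exists phi' phi'', [/\ W phi', W phi'' &
        uM (phi, phi', phi'') = (uM1 phi, phi'', phi')].
Proof.
have [F F_glued] :=
  choice _ (exists_glued_pair hK1 hKS hrM1_hyp hglue_img hglue_r huM huM1).
have [_ [es W1_span] _] := hW1.
have [W [W_fd W_cover]] :=
  fd_krein_subspace_cover hKS (flatten [seq [:: (F e).1; (F e).2] | e <- es]).
have [W_sub _ _] := W_fd.
exists W; split => // phi /W1_span; move: phi.
apply: (span_min (has_glued_pair_subspace huM huM1 W_sub)) => e e_es.
exists (F e).1, (F e).2; split; last exact: F_glued.
- by apply: W_cover; apply/flatten_mapP; exists e; rewrite ?inE ?eqxx.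
- by apply: W_cover; apply/flatten_mapP; exists e; rewrite ?inE ?eqxx ?orbT.
Qed.
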